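(* (a) Let $(A\oplus A^*;A,A^* )$ be a Manin triple of pre-Lie-Yamaguti algebras whose bilinear form is $\omega(x+\alpha,y+\beta)=\langle\alpha,y\rangle-\langle\beta,x\rangle$ ($x,y\in A$, $\alpha,\beta\in A^*$). Then $(A\oplus A^*,[\cdot,\cdot]_C,[\![\cdot,\cdot,\cdot]\!]_C;\omega)$, where $[\cdot,\cdot]_C,[\![\cdot,\cdot,\cdot]\!]_C$ are the brackets of the subadjacent Lie-Yamaguti algebra of the pre-Lie-Yamaguti algebra $A\oplus A^*$, is a symplectic Lie-Yamaguti algebra which is a phase space of the subadjacent Lie-Yamaguti algebra of $(A,*|_A,\{\cdot,\cdot,\cdot\}|_A)$. (b) Conversely, if $(\mathfrak h\oplus\mathfrak h^*,[\cdot,\cdot],[\![\cdot,\cdot,\cdot]\!];\omega_p)$ is a perfect phase space of a Lie-Yamaguti algebra $(\mathfrak h,[\cdot,\cdot]_{\mathfrak h},[\![\cdot,\cdot,\cdot]\!]_{\mathfrak h})$, then $(\mathfrak h\oplus\mathfrak h^*;\mathfrak h,\mathfrak h^* )$, with the pre-Lie-Yamaguti structure on $\mathfrak h\oplus\mathfrak h^*$ defined by $\omega_p(X*Y,Z)=-\omega_p(Y,[X,Z])$ and $\omega_p(\{X,Y,Z\},W)=\omega_p(X,[\![W,Z,Y]\!])$ and with form $\omega_p$, is a Manin triple of pre-Lie-Yamaguti algebras. Thus there is a one-to-one correspondence between Manin triples of pre-Lie-Yamaguti algebras and perfect phase spaces of Lie-Yamaguti algebras.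
   Context: All vector spaces are over a field of characteristic $0$ and finite-dimensional. A Lie-Yamaguti algebra is a vector space $\mathfrak g$ with a bilinear skew-symmetric $[\cdot,\cdot]$ and a trilinear $[\![\cdot,\cdot,\cdot]\!]$ skew-symmetric in its first two arguments such that for all $x,y,z,w,t$: (1) $[[x,y],z]+[[y,z],x]+[[z,x],y]+[\![x,y,z]\!]+[\![y,z,x]\!]+[\![z,x,y]\!]=0$; (2) $[\![[x,y],z,w]\!]+[\![[y,z],x,w]\!]+[\![[z,x],y,w]\!]=0$; (3) $[\![x,y,[z,w]]\!]=[[\![x,y,z]\!],w]+[z,[\![x,y,w]\!]]$; (4) $[\![x,y,[\![z,w,t]\!]]\!]=[\![[\![x,y,z]\!],w,t]\!]+[\![z,[\![x,y,w]\!],t]\!]+[\![z,w,[\![x,y,t]\!]]\!]$. A symplectic structure is a nondegenerate skew-symmetric bilinear form $\omega$ with $\omega(x,[y,z])+\omega(y,[z,x])+\omega(z,[x,y])=0$ and $\omega(z,[\![x,y,w]\!])-\omega(x,[\![w,z,y]\!])+\omega(y,[\![w,z,x]\!])-\omega(w,[\![x,y,z]\!])=0$. On $\mathfrak h\oplus\mathfrak h^*$, $\omega_p(x+\alpha,y+\beta)=\langle\alpha,y\rangle-\langle\beta,x\rangle$. A phase space of $\mathfrak h$ is a Lie-Yamaguti algebra structure on $\mathfrak h\oplus\mathfrak h^*$ for which $\omega_p$ is symplectic and $\mathfrak h$ (with its original brackets) and $\mathfrak h^*$ are Lie-Yamaguti subalgebras; it is perfect if for all $x,y\in\mathfrak h$,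 $\alpha,\beta\in\mathfrak h^*$: $[\![\alpha,\beta,x]\!]\in\mathfrak h$, $[\![x,\alpha,\beta]\!]\in\mathfrak h$, $[\![x,y,\alpha]\!]\in\mathfrak h^*$, $[\![\alpha,x,y]\!]\in\mathfrak h^*$. A pre-Lie-Yamaguti algebra is a vector space $A$ with a bilinear operation $*$ and a trilinear operation $\{\cdot,\cdot,\cdot\}$ such that, writing $[x,y]_C=x*y-y*x$, $(x,y,z)=(x*y)*z-x*(y*z)$ and $\{x,y,z\}_D=\{z,y,x\}-\{z,x,y\}+(y,x,z)-(x,y,z)$, for all $x,y,z,w,t\in A$: (P1) $\{z,[x,y]_C,w\}-\{y*z,x,w\}+\{x*z,y,w\}=0$; (P2) $\{x,y,[z,w]_C\}=z*\{x,y,w\}-w*\{x,y,z\}$; (P3) $\{\{x,y,z\},w,t\}-\{\{x,y,w\},z,t\}-\{x,y,\{z,w,t\}_D\}-\{x,y,\{z,w,t\}\}+\{x,y,\{w,z,t\}\}+\{z,w,\{x,y,t\}\}_D=0$; (P4) $\{z,\{x,y,w\}_D,t\}+\{z,\{x,y,w\},t\}-\{z,\{y,x,w\},t\}+\{z,w,\{x,y,t\}_D\}+\{z,w,\{x,y,t\}\}-\{z,w,\{y,x,t\}\}=\{x,y,\{z,w,t\}\}_D-\{\{x,y,z\}_D,w,t\}$; (P5) $\{x,y,z\}_D*w+\{x,y,z\}*w-\{y,x,z\}*w=\{x,y,z*w\}_D-z*\{x,y,w\}_D$. Its subadjacent Lie-Yamaguti algebra has brackets $[x,y]_C$ and $[\![x,y,z]\!]_C=\{x,y,z\}_D+\{x,y,z\}-\{y,x,z\}$.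 A quadratic pre-Lie-Yamaguti algebra is a pre-Lie-Yamaguti algebra with a nondegenerate skew-symmetric bilinear form $\omega$ such that $\omega(x*y,z)=-\omega(y,[x,z]_C)$ and $\omega(\{x,y,z\},w)=\omega(x,[\![w,z,y]\!]_C)$. A Manin triple of pre-Lie-Yamaguti algebras is a triple $(\mathscr A;A,A')$ where $(\mathscr A,*,\{\cdot,\cdot,\cdot\};\omega)$ is a quadratic pre-Lie-Yamaguti algebra, $\mathscr A=A\oplus A'$ as vector spaces with $A,A'$ subalgebras (closed under $*$ and $\{\cdot,\cdot,\cdot\}$), both $A$ and $A'$ isotropic for $\omega$, and for all $x,y\in A$, $\alpha,\beta\in A'$: $\{\alpha,\beta,x\},\{x,\alpha,\beta\},\{\alpha,x,\beta\}\in A$ and $\{x,y,\alpha\},\{\alpha,x,y\},\{x,\alpha,y\}\in A'$. Via $\langle\alpha,x\rangle:=\omega(\alpha,x)$, $A'$ is identified with $A^*$ and then $\omega$ takes the displayed form $\omega_p$. *)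

From HB Require Import structures.
From mathcomp Require Import all_boot all_order all_algebra.
Set Implicit Arguments. Unset Strict Implicit. Unset Printing Implicit Defensive.
Import GRing.Theory.
Local Open Scope ring_scope.

Section Generic.
Variables (R : fieldType) (U : lmodType R).

Definition bilinear_op (f : U -> U -> U) : Prop :=
  (forall (a : R) x x' y, f (a *: x + x') y = a *: f x y + f x' y) /\
  (forall (a : R) x y y', f x (a *: y + y') = a *: f x y + f x y').

Definition trilinear_op (f : U -> U -> U -> U) : Prop :=
  (forall (a : R) x x' y z, f (a *: x + x') y z = a *: f x y z + f x' y z) /\
  (forall (a : R) x y y' z, f x (a *: y + y') z = a *: f x y z + f x y' z) /\
  (forall (a : R) x y z z', f x y (a *: z + z') = a *: f x y z + f x y z').

Definition bilinear_form (w : U -> U -> R) : Prop :=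
  (forall (a : R) x x' y, w (a *: x + x') y = a * w x y + w x' y) /\
  (forall (a : R) x y y', w x (a *: y + y') = a * w x y + w x y').

Definition LY_alg (br : U -> U -> U) (tr : U -> U -> U -> U) : Prop :=
  [/\ bilinear_op br, trilinear_op tr,
      (forall x y, br x y = - br y x),
      (forall x y z, tr x y z = - tr y x z) &
   [/\ (forall x y z, br (br x y) z + br (br y z) x + br (br z x) y
                       + tr x y z + tr y z x + tr z x y = 0),
       (forall x y z w, tr (br x y) z w + tr (br y z) x w + tr (br z x) y w = 0),
       (forall x y z w, tr x y (br z w) = br (tr x y z) w + br z (tr x y w)) &
       (forall x y z w t, tr x y (tr z w t)
          = tr (tr x y z) w t + tr z (tr x y w) t + tr z w (tr x y t))]].

Definition nondegenerate (w : U -> U -> R) : Prop :=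
  forall x, (forall y, w x y = 0) -> x = 0.

Definition skew_form (w : U -> U -> R) : Prop := forall x y, w x y = - w y x.

Definition symplectic (br : U -> U -> U) (tr : U -> U -> U -> U) (w : U -> U -> R) : Prop :=
  [/\ bilinear_form w, skew_form w, nondegenerate w,
      (forall x y z, w x (br y z) + w y (br z x) + w z (br x y) = 0) &
      (forall x y z t, w z (tr x y t) - w x (tr t z y) + w y (tr t z x) - w t (tr x y z) = 0)].

Section PreLY.
Variables (mul : U -> U -> U) (cu : U -> U -> U -> U).
Definition commC x y := mul x y - mul y x.
Definition assoc x y z := mul (mul x y) z - mul x (mul y z).
Definition cuD x y z := cu z y x - cu z x y + assoc y x z - assoc x y z.
Definition trC x y z := cuD x y z + cu x y z - cu y x z.

Definition preLY_alg : Prop :=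
  [/\ bilinear_op mul, trilinear_op cu,
   (forall x y z w, cu z (commC x y) w - cu (mul y z) x w + cu (mul x z) y w = 0),
   (forall x y z w, cu x y (commC z w) = mul z (cu x y w) - mul w (cu x y z)) &
   [/\ (forall x y z w t, cu (cu x y z) w t - cu (cu x y w) z t - cu x y (cuD z w t)
          - cu x y (cu z w t) + cu x y (cu w z t) + cuD z w (cu x y t) = 0),
       (forall x y z w t, cu z (cuD x y w) t + cu z (cu x y w) t - cu z (cu y x w) t
          + cu z w (cuD x y t) + cu z w (cu x y t) - cu z w (cu y x t)
          = cuD x y (cu z w t) - cu (cuD x y z) w t) &
       (forall x y z w, mul (cuD x y z) w + mul (cu x y z) w - mul (cu y x z) w
          = cuD x y (mul z w) - mul z (cuD x y w))]].

Definition quadratic (w : U -> U -> R) : Prop :=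
  [/\ preLY_alg, bilinear_form w /\ skew_form w /\ nondegenerate w,
      (forall x y z, w (mul x y) z = - w y (commC x z)) &
      (forall x y z t, w (cu x y z) t = w x (trC t z y))].
End PreLY.
End Generic.

Section Double.
Variables (F : fieldType) (V : vectType F).

Definition dual := 'Hom(V, F^o).
Definition DS := (V * dual)%type.

Definition pair (a : dual) (x : V) : F := a x.

Definition omega_p (X Y : DS) : F := pair X.2 Y.1 - pair Y.2 X.1.

Definition inA (X : DS) : Prop := X.2 = 0.
Definition inAd (X : DS) : Prop := X.1 = 0.
Definition emb (x : V) : DS := (x, 0).
Definition embd (a : dual) : DS := (0, a).

Definition manin_triple (mul : DS -> DS -> DS) (cu : DS -> DS -> DS -> DS) : Prop :=
  [/\ quadratic mul cu omega_p,
      (forall x y, inA (mul (emb x) (emb y))) /\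
      (forall x y z, inA (cu (emb x) (emb y) (emb z))),
      (forall a b, inAd (mul (embd a) (embd b))) /\
      (forall a b c, inAd (cu (embd a) (embd b) (embd c))),
      (forall x y, omega_p (emb x) (emb y) = 0) /\
      (forall a b, omega_p (embd a) (embd b) = 0) &
      (forall x y a b,
        [/\ inA (cu (embd a) (embd b) (emb x)), inA (cu (emb x) (embd a) (embd b)) &
             inA (cu (embd a) (emb x) (embd b))] /\
        [/\ inAd (cu (emb x) (emb y) (embd a)), inAd (cu (embd a) (emb x) (emb y)) &
             inAd (cu (emb x) (embd a) (emb y))])].

Definition resA_mul (mul : DS -> DS -> DS) (x y : V) : V := (mul (emb x) (emb y)).1.
Definition resA_cu (cu : DS -> DS -> DS -> DS) (x y z : V) : V := (cu (emb x) (emb y) (emb z)).1.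

Definition phase_space (brh : V -> V -> V) (trh : V -> V -> V -> V)
    (br : DS -> DS -> DS) (tr : DS -> DS -> DS -> DS) : Prop :=
  [/\ LY_alg brh trh, LY_alg br tr, symplectic br tr omega_p,
      (forall x y, br (emb x) (emb y) = emb (brh x y)) /\
      (forall x y z, tr (emb x) (emb y) (emb z) = emb (trh x y z)) &
      (forall a b, inAd (br (embd a) (embd b))) /\
      (forall a b c, inAd (tr (embd a) (embd b) (embd c)))].

Definition perfect (tr : DS -> DS -> DS -> DS) : Prop :=
  forall x y a b,
  [/\ inA (tr (embd a) (embd b) (emb x)), inA (tr (emb x) (embd a) (embd b)),
      inAd (tr (emb x) (emb y) (embd a)) & inAd (tr (embd a) (emb x) (emb y))].
End Double.

(* The operations of a quadratic pre-Lie-Yamaguti algebra are adjoint, with respect to the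
   symplectic form, to the brackets of a Lie-Yamaguti algebra:
   om (x * y) z = - om y [x, z]  and  om {x, y, z} t = om x [[t, z, y]].
   Pairing a pre-Lie-Yamaguti axiom with a test vector and moving every operation across om
   with these identities turns it into a Lie-Yamaguti axiom paired with some vector (for (P3),
   a sum of two instances of the fourth one), so by nondegeneracy the two systems of axioms
   are equivalent.  The two compatibility conditions of a symplectic form say exactly that the
   subadjacent brackets of the adjoint operations are the given brackets.
   For (b) the adjoint operations exist by Riesz representation, and since A and A^* are
   their own om_p-orthogonals, perfectness gives the Manin triple conditions. *)

From HB Require Import structures.
From Pilot Require Import Defs.
From mathcomp Require Import all_boot all_order all_algebra.
From mathcomp Require Import ring.
Set Implicit Arguments. Unset Strict Implicit. Unset Printing Implicit Defensive.
Import GRing.Theory.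
Local Open Scope ring_scope.

Definition linear_of (R : fieldType) (U W : lmodType R) (f : U -> W)
    (fL : forall a x y, f (a *: x + y) = a *: f x + f y) : {linear U -> W} :=
  HB.pack f (GRing.isLinear.Build R U W *:%R f fL).

Section Multilinear.
Variables (R : fieldType) (U : lmodType R).
Implicit Types (x y z t : U) (a : R).

Section BilinearOp.
Variables (f : U -> U -> U) (fB : bilinear_op f).
Let linl z := @linear_of _ _ _ (f ^~ z) (fun a x x' => fB.1 a x x' z).
Let linr z := @linear_of _ _ _ (f z) (fB.2 ^~ z).
Lemma opDl x y z : f (x + y) z = f x z + f y z. Proof. exact: raddfD (linl z) x y. Qed.
Lemma opBl x y z : f (x - y) z = f x z - f y z. Proof. exact: raddfB (linl z) x y. Qed.
Lemma opNl x z : f (- x) z = - f x z. Proof. exact: raddfN (linl z) x. Qed.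
Lemma opZl a x z : f (a *: x) z = a *: f x z. Proof. exact: linearZ_LR (linl z) a x. Qed.
Lemma opDr x y z : f z (x + y) = f z x + f z y. Proof. exact: raddfD (linr z) x y. Qed.
Lemma opNr x z : f z (- x) = - f z x. Proof. exact: raddfN (linr z) x. Qed.
Lemma opZr a x z : f z (a *: x) = a *: f z x. Proof. exact: linearZ_LR (linr z) a x. Qed.
End BilinearOp.

Section TrilinearOp.
Variables (f : U -> U -> U -> U) (fT : trilinear_op f).
Let lin1 y z := @linear_of _ _ _ (fun x => f x y z) (fun a x x' => fT.1 a x x' y z).
Let lin2 x z := @linear_of _ _ _ (fun y => f x y z) (fun a y y' => fT.2.1 a x y y' z).
Let lin3 x y := @linear_of _ _ _ (f x y) (fun a z z' => fT.2.2 a x y z z').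
Lemma op3D1 x y z t : f (x + y) z t = f x z t + f y z t. Proof. exact: raddfD (lin1 z t) x y. Qed.
Lemma op3N1 x z t : f (- x) z t = - f x z t. Proof. exact: raddfN (lin1 z t) x. Qed.
Lemma op3Z1 a x z t : f (a *: x) z t = a *: f x z t. Proof. exact: linearZ_LR (lin1 z t) a x. Qed.
Lemma op3D2 x y z t : f z (x + y) t = f z x t + f z y t. Proof. exact: raddfD (lin2 z t) x y. Qed.
Lemma op3N2 x z t : f z (- x) t = - f z x t. Proof. exact: raddfN (lin2 z t) x. Qed.
Lemma op3Z2 a x z t : f z (a *: x) t = a *: f z x t. Proof. exact: linearZ_LR (lin2 z t) a x. Qed.
Lemma op3D3 x y z t : f z t (x + y) = f z t x + f z t y. Proof. exact: raddfD (lin3 z t) x y. Qed.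
Lemma op3N3 x z t : f z t (- x) = - f z t x. Proof. exact: raddfN (lin3 z t) x. Qed.
Lemma op3Z3 a x z t : f z t (a *: x) = a *: f z t x. Proof. exact: linearZ_LR (lin3 z t) a x. Qed.
End TrilinearOp.

Section BilinearForm.
Variables (w : U -> U -> R) (wB : bilinear_form w).
Let linl z := @linear_of _ _ R^o (w ^~ z) (fun a x x' => wB.1 a x x' z).
Let linr z := @linear_of _ _ R^o (w z) (wB.2 ^~ z).
Lemma bformDl x y z : w (x + y) z = w x z + w y z. Proof. exact: raddfD (linl z) x y. Qed.
Lemma bformNl x z : w (- x) z = - w x z. Proof. exact: raddfN (linl z) x. Qed.
Lemma bformZl a x z : w (a *: x) z = a * w x z. Proof. exact: linearZ_LR (linl z) a x. Qed.
Lemma bform0l z : w 0 z = 0. Proof. exact: raddf0 (linl z). Qed.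
Lemma bformDr x y z : w z (x + y) = w z x + w z y. Proof. exact: raddfD (linr z) x y. Qed.
Lemma bformNr x z : w z (- x) = - w z x. Proof. exact: raddfN (linr z) x. Qed.
Lemma bformZr a x z : w z (a *: x) = a * w z x. Proof. exact: linearZ_LR (linr z) a x. Qed.
Lemma bform0r z : w z 0 = 0. Proof. exact: raddf0 (linr z). Qed.
End BilinearForm.
End Multilinear.

Ltac expand_form wB :=
  rewrite ?(bformDl wB, bformNl wB, bformZl wB, bformDr wB, bformNr wB, bformZr wB).

Lemma subr2_eq0 (V : zmodType) (a b c : V) : (a - b - c == 0) = (a == b + c).
Proof. by rewrite -addrA -opprD subr_eq0. Qed.

Lemma subr3_eq0 (V : zmodType) (a b c d : V) : (a - b - c - d == 0) = (a == b + c + d).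
Proof. by rewrite -!addrA -!opprD !addrA subr_eq0. Qed.

Lemma eq_of_subr_eq (R : zmodType) (a b g h : R) : a = b -> g - h = a - b -> g = h.
Proof. by move=> -> /eqP; rewrite subrr subr_eq0 => /eqP. Qed.

Section Defects.
Variables (R : fieldType) (U : lmodType R).
Variables (mul br : U -> U -> U) (cu tr : U -> U -> U -> U).
Implicit Types x y z w t : U.

Definition form_cyclic (om : U -> U -> R) :=
  forall x y z, om x (br y z) + om y (br z x) + om z (br x y) = 0.

Definition form_tr_invariant (om : U -> U -> R) :=
  forall x y z t, om z (tr x y t) - om x (tr t z y) + om y (tr t z x) - om t (tr x y z) = 0.

Definition LY1_defect x y z :=
  br (br x y) z + br (br y z) x + br (br z x) y + tr x y z + tr y z x + tr z x y.
Definition LY2_defect x y z w := tr (br x y) z w + tr (br y z) x w + tr (br z x) y w.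
Definition LY3_defect x y z w := tr x y (br z w) - br (tr x y z) w - br z (tr x y w).
Definition LY4_defect x y z w t :=
  tr x y (tr z w t) - tr (tr x y z) w t - tr z (tr x y w) t - tr z w (tr x y t).

Local Notation cuD := (cuD mul cu).
Lemma cuDE x y z : cuD x y z = cu z y x - cu z x y + assoc mul y x z - assoc mul x y z.
Proof. by []. Qed.
Lemma trCE x y z : trC mul cu x y z = cuD x y z + cu x y z - cu y x z.
Proof. by []. Qed.

Definition preLY1_defect x y z w := cu z (commC mul x y) w - cu (mul y z) x w + cu (mul x z) y w.
Definition preLY2_defect x y z w := cu x y (commC mul z w) - (mul z (cu x y w) - mul w (cu x y z)).
Definition preLY3_defect x y z w t := cu (cu x y z) w t - cu (cu x y w) z t - cu x y (cuD z w t)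
  - cu x y (cu z w t) + cu x y (cu w z t) + cuD z w (cu x y t).
Definition preLY4_defect x y z w t :=
  cu z (cuD x y w) t + cu z (cu x y w) t - cu z (cu y x w) t
  + cu z w (cuD x y t) + cu z w (cu x y t) - cu z w (cu y x t)
  - (cuD x y (cu z w t) - cu (cuD x y z) w t).
Definition preLY5_defect x y z w :=
  mul (cuD x y z) w + mul (cu x y z) w - mul (cu y x z) w - (cuD x y (mul z w) - mul z (cuD x y w)).
End Defects.

Section NondegenerateForm.
Variables (R : fieldType) (U : lmodType R) (om : U -> U -> R).
Hypotheses (omB : bilinear_form om) (om_skew : Defs.skew_form om).
Hypothesis om_nondeg : Defs.nondegenerate om.

(* Pairing with a test vector turns vector identities into identities in the commutative
   ring [R], where [ring] applies. *)
Lemma eq_by_form X Y : (forall t, om X t = om Y t) -> X = Y.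
Proof.
move=> eqXY; apply/eqP; rewrite -subr_eq0; apply/eqP; apply: om_nondeg => t.
by expand_form omB; rewrite eqXY subrr.
Qed.

Lemma eq_by_formr X Y : (forall t, om t X = om t Y) -> X = Y.
Proof. by move=> eqXY; apply: eq_by_form => t; rewrite om_skew [om Y t]om_skew eqXY. Qed.

Lemma eq0_by_formr X : (forall t, om t X = 0) -> X = 0.
Proof. by move=> X0; apply: eq_by_formr => t; rewrite X0 (bform0r omB). Qed.

End NondegenerateForm.

Section Adjoint.
Variables (R : fieldType) (U : lmodType R) (om : U -> U -> R).
Variables (mul br : U -> U -> U) (cu tr : U -> U -> U -> U).
Hypotheses (omB : bilinear_form om) (om_skew : Defs.skew_form om).
Hypothesis om_nondeg : Defs.nondegenerate om.
Hypotheses (brB : bilinear_op br) (trT : trilinear_op tr).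
Hypotheses (br_skew : forall x y, br x y = - br y x)
           (tr_skew : forall x y z, tr x y z = - tr y x z).
Hypotheses (mul_adj : forall x y z, om (mul x y) z = - om y (br x z))
           (cu_adj : forall x y z t, om (cu x y z) t = om x (tr t z y)).

Lemma mul_bilinear : bilinear_op mul.
Proof.
by split=> a x x' y; apply: (eq_by_form omB om_nondeg) => t; expand_form omB; rewrite !mul_adj
  ?(opDl brB, opZl brB, opDr brB, opZr brB); expand_form omB; ring.
Qed.

Lemma cu_trilinear : trilinear_op cu.
Proof.
by split; [|split] => a x x' y z; apply: (eq_by_form omB om_nondeg) => t; expand_form omB;
  rewrite !cu_adj ?(op3D1 trT, op3Z1 trT, op3D2 trT, op3Z2 trT, op3D3 trT, op3Z3 trT);
  expand_form omB.
Qed.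

Lemma cyclic_of_commC_eq : commC mul =2 br -> form_cyclic br om.
Proof.
move=> commC_br x y z.
have -> : om x (br y z) = - om (mul y z) x + om (mul z y) x.
  by rewrite -commC_br /commC; expand_form omB; rewrite (om_skew x (mul y z)) (om_skew x); ring.
by rewrite !mul_adj [br y x]br_skew (bformNr omB); ring.
Qed.

Lemma commC_eq_of_cyclic : form_cyclic br om -> commC mul =2 br.
Proof.
move=> cyc x y; apply: (eq_by_form omB om_nondeg) => t.
rewrite /commC; expand_form omB; rewrite !mul_adj (om_skew (br x y)) [br x t]br_skew (bformNr omB).
by apply: (eq_of_subr_eq (cyc x y t)); ring.
Qed.

Section CommC.
Hypotheses (commC_br : commC mul =2 br) (LY1 : forall x y z, LY1_defect br tr x y z = 0).

Lemma preLY1_defect_adj x y z w t :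
  om (preLY1_defect mul cu x y z w) t = om z (LY3_defect br tr t w x y).
Proof.
rewrite /preLY1_defect /LY3_defect; expand_form omB; rewrite !cu_adj !mul_adj commC_br.
by rewrite [br y (tr t w x)]br_skew (bformNr omB); ring.
Qed.

Lemma preLY2_defect_adj x y z w t :
  om (preLY2_defect mul cu x y z w) t = - om x (LY2_defect br tr z w t y).
Proof.
rewrite /preLY2_defect /LY2_defect; expand_form omB; rewrite !mul_adj !cu_adj commC_br.
by rewrite [tr t (br z w) y]tr_skew [br z t]br_skew (op3N1 trT) !(bformNr omB); ring.
Qed.

Lemma cuD_adj x y z t : om (cuD mul cu x y z) t = - om z (tr x y t).
Proof.
rewrite cuDE /assoc; expand_form omB; rewrite !cu_adj !mul_adj.
have brBE : br (mul y x) t = br (mul x y) t - br (br x y) t.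
  by rewrite -[br x y]commC_br /commC (opBl brB) opprB addrC subrK.
move: (congr1 (om z) (LY1 x y t)); rewrite /LY1_defect (bform0r omB); expand_form omB => LY1t.
rewrite brBE [br x (br y t)]br_skew [br y (br x t)]br_skew [br x t]br_skew (opNl brB).
rewrite [tr t y x]tr_skew; expand_form omB.
by apply: (eq_of_subr_eq LY1t); ring.
Qed.

(* Abstracting [cuD mul cu] stops [rewrite] from unfolding it into a sum while matching. *)
Ltac hide_cuD := let D := fresh "D" in move: cuD_adj; set D := cuD mul cu; clearbody D => D_adj.

Lemma trC_eq_of_tr_invariant : form_tr_invariant tr om -> forall x y z, trC mul cu x y z = tr x y z.
Proof.
move=> trinv x y z; apply: (eq_by_form omB om_nondeg) => t.
rewrite trCE; hide_cuD; expand_form omB; rewrite D_adj !cu_adj (om_skew (tr x y z)).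
by apply: (eq_of_subr_eq (esym (trinv x y z t))); ring.
Qed.

Section TrC.
Hypothesis trC_tr : forall x y z, trC mul cu x y z = tr x y z.

Lemma tr_invariant_of_trC_eq : form_tr_invariant tr om.
Proof.
move=> x y z t; rewrite -(cu_adj x y z t) -(cu_adj y x z t) (om_skew t) -[tr x y z]trC_tr trCE.
by hide_cuD; expand_form omB; rewrite D_adj; ring.
Qed.

Lemma preLY3_defect_adj x y z w t s :
  om (preLY3_defect mul cu x y z w t) s
  = om x (LY4_defect tr s t z w y + LY4_defect tr z w s t y).
Proof.
rewrite /preLY3_defect /LY4_defect -[tr z w t]trC_tr trCE; hide_cuD.
rewrite (op3D2 trT) (op3N2 trT) (op3D2 trT) [tr z (tr s t w) y]tr_skew.
by expand_form omB; rewrite !cu_adj !D_adj cu_adj; ring.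
Qed.

Lemma preLY4_defect_adj x y z w t s :
  om (preLY4_defect mul cu x y z w t) s = - om z (LY4_defect tr x y s t w).
Proof.
rewrite /preLY4_defect /LY4_defect -[tr x y w]trC_tr -[tr x y t]trC_tr !trCE; hide_cuD.
rewrite (op3D3 trT) (op3N3 trT) (op3D3 trT) (op3D2 trT) (op3N2 trT) (op3D2 trT).
by expand_form omB; rewrite !cu_adj !D_adj cu_adj; ring.
Qed.

Lemma preLY5_defect_adj x y z w s :
  om (preLY5_defect mul cu x y z w) s = om w (LY3_defect br tr x y z s).
Proof.
rewrite /preLY5_defect /LY3_defect -[tr x y z]trC_tr trCE; hide_cuD.
rewrite (opDl brB) (opNl brB) (opDl brB).
by expand_form omB; rewrite !mul_adj !D_adj mul_adj [br z (tr x y s)]br_skew (bformNr omB); ring.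
Qed.

Lemma LY_alg_of_preLY : preLY_alg mul cu -> LY_alg br tr.
Proof.
case=> _ _ P1 P2 [_ P4 _].
have P1d x y z w : preLY1_defect mul cu x y z w = 0 by exact: P1.
have P2d x y z w : preLY2_defect mul cu x y z w = 0 by rewrite /preLY2_defect P2 subrr.
have P4d x y z w t : preLY4_defect mul cu x y z w t = 0 by rewrite /preLY4_defect P4 subrr.
have om_eq0 := eq0_by_formr omB om_skew om_nondeg.
split=> //; split=> //.
- move=> x y z w; apply: om_eq0 => u.
  by apply/eqP; rewrite -oppr_eq0 -(preLY2_defect_adj u w x y z) P2d (bform0l omB).
- move=> x y z w; apply/eqP; rewrite -subr2_eq0; apply/eqP; apply: om_eq0 => u.
  by rewrite -(preLY1_defect_adj z w u y x) P1d (bform0l omB).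
- move=> x y z w t; apply/eqP; rewrite -subr3_eq0; apply/eqP; apply: om_eq0 => u.
  by apply/eqP; rewrite -oppr_eq0 -(preLY4_defect_adj x y u t w z) P4d (bform0l omB).
Qed.

Lemma preLY_alg_of_LY : LY_alg br tr -> preLY_alg mul cu.
Proof.
case=> _ _ _ _ [_ LY2 LY3 LY4].
have LY2d x y z w : LY2_defect br tr x y z w = 0 by exact: LY2.
have LY3d x y z w : LY3_defect br tr x y z w = 0 by apply/eqP; rewrite subr2_eq0 LY3.
have LY4d x y z w t : LY4_defect tr x y z w t = 0 by apply/eqP; rewrite subr3_eq0 LY4.
split; [exact: mul_bilinear | exact: cu_trilinear | | | split].
- by move=> x y z w; apply: om_nondeg => t; rewrite preLY1_defect_adj LY3d (bform0r omB).
- move=> x y z w; apply/eqP; rewrite -subr_eq0; apply/eqP; apply: om_nondeg => t.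
  by rewrite preLY2_defect_adj LY2d (bform0r omB) oppr0.
- by move=> x y z w t; apply: om_nondeg => s; rewrite preLY3_defect_adj !LY4d addr0 (bform0r omB).
- move=> x y z w t; apply/eqP; rewrite -subr_eq0; apply/eqP; apply: om_nondeg => s.
  by rewrite preLY4_defect_adj LY4d (bform0r omB) oppr0.
- move=> x y z w; apply/eqP; rewrite -subr_eq0; apply/eqP; apply: om_nondeg => s.
  by rewrite preLY5_defect_adj LY3d (bform0r omB).
Qed.
End TrC.
End CommC.
End Adjoint.

Section Subadjacent.
Variables (R : fieldType) (U : lmodType R) (om : U -> U -> R).
Variables (mul : U -> U -> U) (cu : U -> U -> U -> U).
Hypotheses (omB : bilinear_form om) (om_nondeg : Defs.nondegenerate om).
Hypotheses (mulB : bilinear_op mul) (cuT : trilinear_op cu).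

Ltac expand_mul := rewrite ?(opDl mulB, opNl mulB, opZl mulB, opDr mulB, opNr mulB, opZr mulB).
Ltac expand_cu := rewrite ?(op3D1 cuT, op3N1 cuT, op3Z1 cuT, op3D2 cuT, op3N2 cuT, op3Z2 cuT,
                            op3D3 cuT, op3N3 cuT, op3Z3 cuT).

Lemma commC_skew x y : commC mul x y = - commC mul y x.
Proof. by rewrite /commC opprB. Qed.

Lemma commC_bilinear : bilinear_op (commC mul).
Proof.
by split=> a x x' y; rewrite /commC ?(opDl mulB, opZl mulB, opDr mulB, opZr mulB)
  scalerBr opprD addrACA.
Qed.

Lemma trC_skew x y z : trC mul cu x y z = - trC mul cu y x z.
Proof.
by apply: (eq_by_form omB om_nondeg) => t; rewrite /trC /cuD /assoc; expand_form omB; ring.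
Qed.

Lemma trC_trilinear : trilinear_op (trC mul cu).
Proof.
split; [|split] => a x x' y z; apply: (eq_by_form omB om_nondeg) => t;
  rewrite /trC /cuD /assoc; expand_mul; expand_cu; expand_mul; expand_form omB; ring.
Qed.

Lemma subadjacent_LY1 x y z : LY1_defect (commC mul) (trC mul cu) x y z = 0.
Proof.
apply: om_nondeg => t; rewrite /LY1_defect /commC /trC /cuD /assoc.
by expand_mul; expand_form omB; ring.
Qed.
End Subadjacent.

Section QuadraticPreLY.
Variables (R : fieldType) (U : lmodType R) (om : U -> U -> R).
Variables (mul : U -> U -> U) (cu : U -> U -> U -> U).

Lemma quadratic_subadjacent_symplectic : quadratic mul cu om ->
  LY_alg (commC mul) (trC mul cu) /\ symplectic (commC mul) (trC mul cu) om.
Proof.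
case=> preLY [omB [om_skew om_nondeg]] mul_adj cu_adj; have [mulB cuT _ _ _] := preLY.
have brB := commC_bilinear mulB; have trT := trC_trilinear omB om_nondeg mulB cuT.
have br_skew := commC_skew mul; have tr_skew := trC_skew mul cu omB om_nondeg.
have LY1 := subadjacent_LY1 cu omB om_nondeg mulB.
split; first exact: (LY_alg_of_preLY omB om_skew om_nondeg brB trT br_skew tr_skew
                        mul_adj cu_adj (fun _ _ => erefl) LY1 (fun _ _ _ => erefl) preLY).
split=> //; first exact: (cyclic_of_commC_eq omB om_skew br_skew mul_adj).
exact: (tr_invariant_of_trC_eq omB om_skew brB br_skew tr_skew mul_adj cu_adj
          (fun _ _ => erefl) LY1 (fun _ _ _ => erefl)).
Qed.

Lemma symplectic_adjoint_quadratic (br : U -> U -> U) (tr : U -> U -> U -> U) :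
  LY_alg br tr -> symplectic br tr om ->
  (forall x y z, om (mul x y) z = - om y (br x z)) ->
  (forall x y z t, om (cu x y z) t = om x (tr t z y)) ->
  quadratic mul cu om.
Proof.
move=> LY [omB om_skew om_nondeg cyc trinv] mul_adj cu_adj.
have [brB trT br_skew tr_skew [LY1 _ _ _]] := LY.
have commC_br := commC_eq_of_cyclic omB om_skew om_nondeg br_skew mul_adj cyc.
have trC_tr := trC_eq_of_tr_invariant omB om_skew om_nondeg brB br_skew tr_skew
                 mul_adj cu_adj commC_br LY1 trinv.
split=> //.
- exact: (preLY_alg_of_LY omB om_nondeg brB trT br_skew tr_skew mul_adj cu_adj
            commC_br LY1 trC_tr LY).
- by move=> x y z; rewrite commC_br.
- by move=> x y z t; rewrite trC_tr.
Qed.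
End QuadraticPreLY.

Lemma linfun_linearE (F : fieldType) (aT rT : vectType F) (f : aT -> rT) :
  (forall a x y, f (a *: x + y) = a *: f x + f y) -> linfun f =1 f.
Proof. by move=> fL; apply: (lfunE (linear_of fL)). Qed.

Section Riesz.
Variables (F : fieldType) (U : vectType F) (om : U -> U -> F).
Hypotheses (omB : bilinear_form om) (om_nondeg : Defs.nondegenerate om).

Definition form_map : 'Hom(U, 'Hom(U, F^o)) := linfun (fun X => linfun (om X : U -> F^o)).

Definition form_repr (f : U -> F) : U := (form_map^-1)%VF (linfun (f : U -> F^o)).

Lemma form_mapE X Z : form_map X Z = om X Z.
Proof.
have omXL (Y : U) : linfun (om Y : U -> F^o) =1 om Y.
  exact: (@linfun_linearE _ _ F^o (om Y) (fun a => omB.2 a Y)).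
rewrite /form_map linfun_linearE ?omXL // => a X1 X2.
by apply/lfunP => Z'; rewrite add_lfunE scale_lfunE !omXL omB.1.
Qed.

Lemma form_map_inj : injective form_map.
Proof. by move=> X Y eqXY; apply: (eq_by_form omB om_nondeg) => t; rewrite -!form_mapE eqXY. Qed.

Lemma limg_form_map : limg form_map = fullv.
Proof.
apply/eqP; rewrite eqEdim subvf /= limg_dim_eq; last first.
  by have /lker0P/eqP -> := form_map_inj; rewrite capv0.
by rewrite !dimvf; change (dim U * 1 <= dim U)%N; rewrite muln1.
Qed.

Lemma form_reprE (f : U -> F) : (forall a X Y, f (a *: X + Y) = a * f X + f Y) ->
  forall Z, om (form_repr f) Z = f Z.
Proof.
move=> fL Z; rewrite -form_mapE limg_lfunVK ?limg_form_map ?memvf //.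
exact: (@linfun_linearE _ _ F^o f fL).
Qed.
End Riesz.

Section Transport.
Variables (R : fieldType) (U W : lmodType R) (f : {linear U -> W}).
Hypothesis f_inj : injective f.
Variables (brh : U -> U -> U) (trh : U -> U -> U -> U).
Variables (br : W -> W -> W) (tr : W -> W -> W -> W).
Hypotheses (f_br : forall x y, f (brh x y) = br (f x) (f y))
           (f_tr : forall x y z, f (trh x y z) = tr (f x) (f y) (f z)).

Lemma LY_alg_transport : LY_alg br tr -> LY_alg brh trh.
Proof.
case=> brB trT br_skew tr_skew [LY1 LY2 LY3 LY4].
split; [split | split; [|split] | | | split] => *; apply: f_inj;
  rewrite ?(linearP, linearD, linearN, linear0, f_br, f_tr) //.
- exact: brB.1.
- exact: brB.2.
- exact: trT.1.
- exact: trT.2.1.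
- exact: trT.2.2.
Qed.
End Transport.

Section DoubleSpace.
Variables (F : fieldType) (V : vectType F).
Local Notation DS := (DS V).
Local Notation om := (@omega_p F V).
Implicit Types (X Y Z : DS) (x y : V) (a b : dual V).

Lemma emb_is_linear (k : F) x y : emb (k *: x + y) = k *: emb x + emb y :> DS.
Proof. by rewrite /emb; congr (_, _); rewrite /= scaler0 addr0. Qed.

Definition emb_linear : {linear V -> DS} := linear_of emb_is_linear.

Lemma embD x y : emb (x + y) = emb x + emb y :> DS.
Proof. by rewrite /emb; congr (_, _); rewrite addr0. Qed.

Lemma embN x : emb (- x) = - emb x :> DS.
Proof. by rewrite /emb; congr (_, _); rewrite oppr0. Qed.

Lemma emb_inj : injective (@emb F V).
Proof. by move=> x y /(congr1 fst). Qed.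

Lemma inA_emb X : inA X -> emb X.1 = X.
Proof. by case: X => x a; rewrite /inA /inAd /= => ->. Qed.

Lemma inAd_embd X : inAd X -> embd X.2 = X.
Proof. by case: X => x a; rewrite /inA /inAd /= => ->. Qed.

Lemma inAN X : inA X -> inA (- X).
Proof. by rewrite /inA /= => ->; rewrite oppr0. Qed.

Lemma inAdN X : inAd X -> inAd (- X).
Proof. by rewrite /inAd /= => ->; rewrite oppr0. Qed.

Lemma inAdD X Y : inAd X -> inAd Y -> inAd (X + Y).
Proof. by rewrite /inAd /= => -> ->; rewrite addr0. Qed.

Lemma omega_p_inA X Y : inA X -> inA Y -> om X Y = 0.
Proof. by rewrite /inA /omega_p /pair => -> ->; rewrite !zero_lfunE subrr. Qed.

Lemma omega_p_inAd X Y : inAd X -> inAd Y -> om X Y = 0.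
Proof. by rewrite /inAd /omega_p /pair => -> ->; rewrite !linear0 subrr. Qed.

Lemma inA_of_omega_p X : (forall z, om X (emb z) = 0) -> inA X.
Proof.
move=> Xperp; apply/lfunP => z; rewrite zero_lfunE; have := Xperp z.
by rewrite /omega_p /pair /= zero_lfunE subr0.
Qed.

(* [om X (embd c) = - c X.1], so this is the statement that linear functionals separate the
   points of [V], which follows from the nondegeneracy of [om]. *)
Lemma inAd_of_omega_p : Defs.nondegenerate om ->
  forall X, (forall c, om X (embd c) = 0) -> inAd X.
Proof.
move=> om_nondeg X Xperp; apply: (congr1 fst (om_nondeg (emb X.1) _)) => Z.
by have := Xperp Z.2; rewrite /omega_p /pair /= linear0 zero_lfunE.
Qed.

Section ManinToPhaseSpace.
Variables (mul : DS -> DS -> DS) (cu : DS -> DS -> DS -> DS).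
Hypothesis manin : manin_triple mul cu.

Lemma manin_triple_phase_space :
  phase_space (commC (resA_mul mul)) (trC (resA_mul mul) (resA_cu cu)) (commC mul) (trC mul cu).
Proof.
have [quad [mulA cuA] [mulAd cuAd] _ _] := manin.
have [LYsub sympl] := quadratic_subadjacent_symplectic quad.
have emb_mul x y : emb (resA_mul mul x y) = mul (emb x) (emb y) by exact: inA_emb (mulA x y).
have emb_cu x y z : emb (resA_cu cu x y z) = cu (emb x) (emb y) (emb z).
  exact: inA_emb (cuA x y z).
have emb_br x y : emb (commC (resA_mul mul) x y) = commC mul (emb x) (emb y).
  by rewrite /commC embD embN !emb_mul.
have emb_tr x y z : emb (trC (resA_mul mul) (resA_cu cu) x y z)
                    = trC mul cu (emb x) (emb y) (emb z).
  by rewrite /trC /cuD /assoc; do ![rewrite embD | rewrite embN | rewrite emb_mul | rewrite emb_cu].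
have mulAd' X Y : inAd X -> inAd Y -> inAd (mul X Y).
  by move=> /inAd_embd <- /inAd_embd <-; apply: mulAd.
have cuAd' X Y Z : inAd X -> inAd Y -> inAd Z -> inAd (cu X Y Z).
  by move=> /inAd_embd <- /inAd_embd <- /inAd_embd <-; apply: cuAd.
split=> //.
- exact: (LY_alg_transport (f := emb_linear) emb_inj emb_br emb_tr).
- by split=> *; rewrite ?emb_br ?emb_tr.
- split=> [a b | a b c]; rewrite /commC /trC /cuD /assoc;
    by repeat first [apply: inAdD | apply: inAdN | apply: mulAd' | apply: cuAd' | exact: erefl].
Qed.
End ManinToPhaseSpace.

Section PhaseSpaceToManin.
Variables (brh : V -> V -> V) (trh : V -> V -> V -> V).
Variables (br : DS -> DS -> DS) (tr : DS -> DS -> DS -> DS).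
Hypothesis phase : phase_space brh trh br tr.

Lemma phase_space_adjoint_ops : exists (mul : DS -> DS -> DS) (cu : DS -> DS -> DS -> DS),
  (forall X Y Z, om (mul X Y) Z = - om Y (br X Z)) /\
  (forall X Y Z W, om (cu X Y Z) W = om X (tr W Z Y)).
Proof.
have [_ [brB trT _ _ _] [omB _ om_nondeg _ _] _ _] := phase.
exists (fun X Y => form_repr om (fun Z => - om Y (br X Z))).
exists (fun X Y Z => form_repr om (fun W => om X (tr W Z Y))).
split=> *; rewrite form_reprE // => k Z1 Z2.
- by rewrite (opDr brB) (opZr brB) (bformDr omB) (bformZr omB); ring.
- by rewrite (op3D1 trT) (op3Z1 trT) (bformDr omB) (bformZr omB).
Qed.

Hypothesis perf : perfect tr.
Variables (mul : DS -> DS -> DS) (cu : DS -> DS -> DS -> DS).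
Hypotheses (mul_adj : forall X Y Z, om (mul X Y) Z = - om Y (br X Z))
           (cu_adj : forall X Y Z W, om (cu X Y Z) W = om X (tr W Z Y)).

Lemma perfect_phase_space_manin_triple : manin_triple mul cu.
Proof.
have [_ LY sympl [emb_br emb_tr] [brAd trAd]] := phase.
have [omB _ om_nondeg _ _] := sympl; have [_ _ _ tr_skew _] := LY.
have inAd_of := inAd_of_omega_p om_nondeg.
split.
- exact: symplectic_adjoint_quadratic LY sympl mul_adj cu_adj.
- split=> x y; [| move=> z]; apply: inA_of_omega_p => t;
    by rewrite ?mul_adj ?cu_adj ?emb_br ?emb_tr omega_p_inA ?oppr0.
- split=> a b; [| move=> c]; apply: inAd_of => d;
    rewrite ?mul_adj ?cu_adj omega_p_inAd ?oppr0 //.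
- by split=> ? ?; [apply: omega_p_inA | apply: omega_p_inAd].
have tr_ddx c d z : inA (tr (embd c) (embd d) (emb z)) by case: (perf z z c d).
have tr_xdd z c d : inA (tr (emb z) (embd c) (embd d)) by case: (perf z z c d).
have tr_xxd z z' c : inAd (tr (emb z) (emb z') (embd c)) by case: (perf z z' c c).
have tr_dxx c z z' : inAd (tr (embd c) (emb z) (emb z')) by case: (perf z z' c c).
move=> x y a b; split; split.
- by apply: inA_of_omega_p => z; rewrite cu_adj omega_p_inAd.
- by apply: inA_of_omega_p => z; rewrite cu_adj omega_p_inA.
- by apply: inA_of_omega_p => z; rewrite cu_adj tr_skew omega_p_inAd //; apply: inAdN.
- by apply: inAd_of => d; rewrite cu_adj omega_p_inA.
- by apply: inAd_of => d; rewrite cu_adj omega_p_inAd.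
- by apply: inAd_of => d; rewrite cu_adj tr_skew omega_p_inA //; apply: inAN.
Qed.
End PhaseSpaceToManin.
End DoubleSpace.

Theorem theorem4p13 (F : fieldType) (V : vectType F) (F_char0 : [pchar F] =i pred0) :
  (* (a) *)
  (forall (mul : DS V -> DS V -> DS V) (cu : DS V -> DS V -> DS V -> DS V),
     manin_triple mul cu ->
     LY_alg (commC mul) (trC mul cu) /\
     symplectic (commC mul) (trC mul cu) (@omega_p F V) /\
     phase_space (commC (resA_mul mul)) (trC (resA_mul mul) (resA_cu cu))
                 (commC mul) (trC mul cu)) /\
  (* (b) *)
  (forall (brh : V -> V -> V) (trh : V -> V -> V -> V)
          (br : DS V -> DS V -> DS V) (tr : DS V -> DS V -> DS V -> DS V),
     phase_space brh trh br tr -> perfect tr ->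
     (exists (mul : DS V -> DS V -> DS V) (cu : DS V -> DS V -> DS V -> DS V),
        (forall X Y Z, omega_p (mul X Y) Z = - omega_p Y (br X Z)) /\
        (forall X Y Z W, omega_p (cu X Y Z) W = omega_p X (tr W Z Y))) /\
     (forall (mul : DS V -> DS V -> DS V) (cu : DS V -> DS V -> DS V -> DS V),
        (forall X Y Z, omega_p (mul X Y) Z = - omega_p Y (br X Z)) ->
        (forall X Y Z W, omega_p (cu X Y Z) W = omega_p X (tr W Z Y)) ->
        manin_triple mul cu)).
Proof.
split=> [mul cu manin | brh trh br tr phase perf].
- have [quad _ _ _ _] := manin.
  have [LYsub sympl] := quadratic_subadjacent_symplectic quad.
  by split=> //; split=> //; apply: manin_triple_phase_space.
- split; first exact: phase_space_adjoint_ops phase.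
  exact: perfect_phase_space_manin_triple phase perf.
Qed.
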